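(* Let $p$ be a prime and $n,k$ positive integers with $(p,k-1)=1$ and $n=\mathrm{ind}_p(k)$; let $G=G(p,n,k)=\langle a,b;\ a^p=1,\ b^n=1,\ b^{-1}ab=a^k\rangle$. Then $\mathrm{P}(G)$ and $\Lambda(G)$ are complete, i.e. $\Sigma_G(R)$ and $\Sigma_G(L)$ are complete, where $R=\{k^j-1\bmod p:j\in\mathbb{Z}_n\}$ and $L=\{1-k^j\bmod p: j\in\mathbb{Z}_n\}$.
   Context: $\mathrm{ind}_p(k)$ is the least positive integer $d$ with $k^d\equiv 1\pmod p$. Elements of $G$ are written uniquely as $a^ib^j$; $k_t=k^t-1\pmod p$. Commutators are $[x,y]=x^{-1}y^{-1}xy$; $(x)\rho(g)=[x,g]$, $(x)\lambda(g)=[g,x]$; maps are written on the right and composed left to right. $\mathrm{P}(G)$, $\Lambda(G)$ are the semigroups generated by all $\rho(g)$, resp. all $\lambda(g)$; they equal $\Sigma_G(R)$ and $\Sigma_G(L)$. For $x,y\in\mathbb{Z}_p$, $(a^ib^j)\mu(x,y)=a^{xik^j-yk_j}$, $C(x,y)=\{\mu(x,yz):z\in\mathbb{Z}_p\}$. $S^*$ is the multiplicative subsemigroup of $\mathbb{Z}_p$ generated by $S$; $\Sigma_G(S)$ is the semigroup generated by $\{\mu(s,z):s\in S,z\in\mathbb{Z}_p\}$. For $x\in S^*$, $Y(x)=\{s^*z: s^*\in S^*, z\in\mathbb{Z}_p, \exists s\in S,\ x\equiv ss^*\}$; the $x$-family $\{C(x,y):y\in Y(x)\}$ is complete if it contains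 $C(x,1)$, and $\Sigma_G(S)$ is complete if all $x$-families ($x\in S^*$) are complete. *)

From mathcomp Require Import all_boot all_order all_algebra.
Set Implicit Arguments. Unset Strict Implicit. Unset Printing Implicit Defensive.
Import GRing.Theory.
Local Open Scope ring_scope.

Definition is_ind (p k d : nat) : Prop :=
  (0 < d)%N /\ (k ^ d = 1 %[mod p])%N /\
  (forall d', (0 < d')%N -> (k ^ d' = 1 %[mod p])%N -> (d <= d')%N).

(* Elements a^i b^j of G(p,n,k) are represented by the pairs (i, j),
   i in Z_p, j in Z_n. *)
Definition Gelt (p n : nat) := ('F_p * 'I_n)%type.

Definition kF (p k : nat) : 'F_p := k%:R.

Definition mu (p n k : nat) (x y : 'F_p) : {ffun Gelt p n -> Gelt p n} :=
  [ffun g : Gelt p n =>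
     let i := g.1 in let j := nat_of_ord g.2 in
     ((x * i * (kF p k) ^+ j - y * ((kF p k) ^+ j - 1)) : 'F_p,
      (Ordinal (leq_ltn_trans (leq0n j) (ltn_ord g.2)) : 'I_n))].

Definition Cfam (p n k : nat) (x y : 'F_p) : {set {ffun Gelt p n -> Gelt p n}} :=
  [set mu n k x (y * z) | z : 'F_p].

Definition in_Sstar (p : nat) (S : {set 'F_p}) (x : 'F_p) : Prop :=
  exists s : seq 'F_p, s <> [::] /\ all (fun t => t \in S) s /\ x = \prod_(t <- s) t.

Definition in_Y (p : nat) (S : {set 'F_p}) (x y : 'F_p) : Prop :=
  exists (ss z s : 'F_p), in_Sstar S ss /\ s \in S /\ x = s * ss /\ y = ss * z.

(* the x-family {C(x,y) : y in Y(x)} is complete iff it contains C(x,1) *)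
Definition family_complete (p n k : nat) (S : {set 'F_p}) (x : 'F_p) : Prop :=
  exists y : 'F_p, in_Y S x y /\ Cfam n k x y = Cfam n k x 1.

Definition Sigma_complete (p n k : nat) (S : {set 'F_p}) : Prop :=
  forall x : 'F_p, in_Sstar S x -> family_complete n k S x.

Definition Rset (p n k : nat) : {set 'F_p} := [set (kF p k) ^+ j - 1 | j : 'I_n].
Definition Lset (p n k : nat) : {set 'F_p} := [set 1 - (kF p k) ^+ j | j : 'I_n].

From mathcomp Require Import all_boot all_order all_algebra all_field.

Set Implicit Arguments.
Unset Strict Implicit.
Unset Printing Implicit Defensive.

Import GRing.Theory.

Local Open Scope ring_scope.

(* Both R and L contain 0 (take j = 0) and a nonzero element, k - 1 resp.
   1 - k (take j = 1, which lies in Z_n because k is not 1 mod p).  The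
   nonzero element c gives 1 = c^(p-1) in S^*, so every x in S^* factors as
   x = s t with s in S and t in S^*.  If x = 0 we take s = 0 and t = 1, so
   that 1 lies in Y(x); otherwise t is a unit of Z_p lying in Y(x), and
   C(x, t) = C(x, 1) because z |-> t z permutes Z_p. *)

Lemma expf_card_pred (F : finFieldType) (c : F) : c != 0 -> c ^+ #|F|.-1 = 1.
Proof.
move=> c0; apply: (mulfI c0); rewrite mulr1 -exprS prednK ?expf_card //.
by apply/card_gt0P; exists 0.
Qed.

Section Sstar.

Variables (p : nat) (S : {set 'F_p}).

Lemma in_Sstar1 (c : 'F_p) : prime p -> c \in S -> c != 0 -> in_Sstar S 1.
Proof.
move=> p_pr cS c0; exists (nseq p.-1 c); split; last split.
- by apply/eqP; rewrite -size_eq0 size_nseq -lt0n -subn1 subn_gt0 prime_gt1.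
- by apply/allP => t /nseqP[-> _].
- by rewrite big_nseq iter_mulr_1; have := expf_card_pred c0; rewrite card_Fp.
Qed.

Lemma in_Sstar_factor (x : 'F_p) : in_Sstar S 1 -> in_Sstar S x ->
  exists s ss, [/\ s \in S, in_Sstar S ss & x = s * ss].
Proof.
move=> S1 [[|t r] [nonnil []]] //= /andP[tS rS] -> {nonnil}.
exists t; rewrite big_cons.
case: r rS => [|u r] rS; first by exists 1; rewrite big_nil.
by exists (\prod_(v <- u :: r) v); split=> //; exists (u :: r).
Qed.

End Sstar.

Lemma Cfam_nz (p n k : nat) (x y : 'F_p) :
  y != 0 -> Cfam n k x y = Cfam n k x 1.
Proof.
move=> y0; apply/setP => f; apply/imsetP/imsetP => -[z _ ->].
- by exists (y * z); rewrite ?mul1r.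
- by exists (y^-1 * z); rewrite // mul1r mulrA divff // mul1r.
Qed.

Lemma Sigma_complete_of_in_Sstar1 (p n k : nat) (S : {set 'F_p}) :
  0 \in S -> in_Sstar S 1 -> Sigma_complete n k S.
Proof.
move=> S0 S1 x xS; have [->|x0] := eqVneq x 0.
  by exists 1; split=> //; exists 1, 1, 0; rewrite mul0r mulr1.
have [s [ss [sS ssS xE]]] := in_Sstar_factor S1 xS.
have ss0 : ss != 0 by apply: contraNneq x0 => ss0; rewrite xE ss0 mulr0.
by exists ss; split; [exists ss, 1, s; rewrite mulr1 | exact: Cfam_nz].
Qed.

Lemma is_ind_gt1 (p k n : nat) :
  (1 < p)%N -> coprime p (k - 1) -> is_ind p k n -> (1 < n)%N.
Proof.
move=> p_gt1 pk [n_gt0 [kn _]]; rewrite ltn_neqAle eq_sym n_gt0 andbT.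
apply/eqP => n1; move: kn pk; rewrite n1 expn1.
case: k => [|k]; first by rewrite /coprime gcdn0 gtn_eqF.
move/eqP; rewrite eqn_mod_dvd // => /gcdn_idPl pk1.
by rewrite /coprime pk1 gtn_eqF.
Qed.

Lemma kF_sub1_neq0 (p k : nat) : prime p -> (0 < k)%N -> coprime p (k - 1) ->
  kF p k - 1 != 0.
Proof.
move=> p_pr k_gt0 pk; have -> : kF p k - 1 = (k - 1)%:R by rewrite natrB.
by rewrite -(dvdn_pcharf (pchar_Fp p_pr)) -prime_coprime.
Qed.

Theorem corollary6p2 (p n k : nat) :
  prime p -> (0 < n)%N -> (0 < k)%N -> coprime p (k - 1) -> is_ind p k n ->
  Sigma_complete n k (Rset p n k) /\ Sigma_complete n k (Lset p n k).
Proof.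
move=> p_pr n_gt0 k_gt0 pk ind_n.
have n_gt1 := is_ind_gt1 (prime_gt1 p_pr) pk ind_n.
have k1_neq0 := kF_sub1_neq0 p_pr k_gt0 pk.
split; apply: Sigma_complete_of_in_Sstar1.
- by apply/imsetP; exists (Ordinal n_gt0); rewrite ?subrr.
- by apply: (in_Sstar1 p_pr _ k1_neq0); apply/imsetP; exists (Ordinal n_gt1).
- by apply/imsetP; exists (Ordinal n_gt0); rewrite ?subrr.
- apply: (@in_Sstar1 _ _ (1 - kF p k) p_pr); last by rewrite -opprB oppr_eq0.
  by apply/imsetP; exists (Ordinal n_gt1).
Qed.
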